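(* Assume the following setting: $\mathcal{F}$ is a nonempty family of graphs with $\chi(\mathcal{F})=r+1\ge 3$; $0<\varepsilon<\frac12$, $0<\sigma<\frac{\varepsilon^3}{7}$, $0\le\alpha\le 1-\frac1r-\varepsilon$; $\mathcal{G}'_n$ is the set of $\mathcal{F}$-free $n$-vertex graphs with minimum degree larger than $(\pi(\mathcal{F})-\varepsilon)n$; and there is $N$ such that for all $n>N$, $|\mathrm{ex}(n,\mathcal{F})-\mathrm{ex}(n-1,\mathcal{F})-\pi(\mathcal{F})n|\le\sigma n$ and $|\lambda_\alpha(\mathcal{G}'_n)-2\mathrm{ex}(n,\mathcal{F})/n|\le\sigma$. Let $G$ be an $\mathcal{F}$-free graph on $n$ vertices with minimum degree $\delta$, let $\mathbf{x}=(x_1,\dots,x_n)$ be a non-negative unit eigenvector of $A_\alpha(G)$ corresponding to $\lambda_\alpha(G)$, and $x=\min\{x_1,\dots,x_n\}$. If $\lambda_{\alpha}(G)\geq \lambda_{\alpha}(\mathcal{G}'_{n})$ and $\delta\leq (\pi (\mathcal{F})-\varepsilon)n$, then for all sufficiently large $n$, $$x^2<\frac{1-\varepsilon^2}{n}.$$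
   Context: $\lambda_\alpha(G)$ is the largest eigenvalue of $A_\alpha(G)=\alpha D(G)+(1-\alpha)A(G)$ ($A$ adjacency matrix, $D$ diagonal degree matrix); $\lambda_\alpha(\mathcal{G}'_n)=\max_{H\in\mathcal{G}'_n}\lambda_\alpha(H)$. $\chi(\mathcal{F})=\min_{F\in\mathcal{F}}\chi(F)$. $\mathrm{ex}(n,\mathcal{F})$ is the maximum number of edges of an $\mathcal{F}$-free $n$-vertex graph, and $\pi(\mathcal{F})=\lim_{n\to\infty}\mathrm{ex}(n,\mathcal{F})/\binom n2$. *)

From HB Require Import structures.
From mathcomp Require Import all_boot all_order all_algebra.
From mathcomp Require Import all_classical all_reals all_analysis.
Set Implicit Arguments. Unset Strict Implicit. Unset Printing Implicit Defensive.
Import Order.TTheory GRing.Theory Num.Theory numFieldNormedType.Exports.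
Local Open Scope classical_set_scope.
Local Open Scope ring_scope.

Record graph (n : nat) := Graph {
  gadj : rel 'I_n;
  gsym : symmetric gadj;
  girr : irreflexive gadj }.

Definition gfamily := forall k : nat, graph k -> Prop.

Definition contains n k (G : graph n) (H : graph k) : Prop :=
  exists f : 'I_k -> 'I_n, injective f /\
    forall u v, gadj H u v -> gadj G (f u) (f v).

Definition Ffree (F : gfamily) n (G : graph n) : Prop :=
  forall k (H : graph k), F k H -> ~ contains G H.

Definition colorable k (H : graph k) (c : nat) : Prop :=
  exists f : 'I_k -> 'I_c, forall u v, gadj H u v -> f u != f v.

Definition family_chi (F : gfamily) (c : nat) : Prop :=
  (exists k (H : graph k), F k H /\ colorable H c) /\
  (forall k (H : graph k), F k H -> ~ colorable H c.-1).

Definition deg n (G : graph n) (i : 'I_n) : nat := #|[set j | gadj G i j]|.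

(* minimum degree (for n >= 1; the index n is never attained) *)
Definition mindeg n (G : graph n) : nat := \big[minn/n]_(i < n) deg G i.

Definition nedges n (G : graph n) : nat :=
  #|[set p : 'I_n * 'I_n | (p.1 < p.2)%N && gadj G p.1 p.2]|.

Definition exF (R : realType) (F : gfamily) (n : nat) : R :=
  sup [set (nedges G)%:R | G in [set G : graph n | Ffree F G]].

Definition pi_fam (R : realType) (F : gfamily) : R :=
  limn (fun n : nat => exF R F n / ('C(n, 2))%:R).

Definition Aalpha (R : realType) (alpha : R) n (G : graph n) : 'M[R]_n :=
  \matrix_(i, j) (alpha * ((i == j)%:R * (deg G i)%:R)
                  + (1 - alpha) * (gadj G i j)%:R).

Definition lambda_alpha (R : realType) (alpha : R) n (G : graph n) : R :=
  sup [set a : R | eigenvalue (Aalpha alpha G) a].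

Definition Gprime (R : realType) (F : gfamily) (eps : R) (n : nat) : set (graph n) :=
  [set H : graph n | Ffree F H /\ (pi_fam R F - eps) * n%:R < (mindeg H)%:R].

Definition lambda_fam (R : realType) (alpha : R) (F : gfamily) (eps : R) (n : nat) : R :=
  sup [set lambda_alpha alpha H | H in @Gprime R F eps n].

Definition vmin (R : realType) n (x : 'cV[R]_n) : R := inf (range (fun i => x i 0)).

From HB Require Import structures.
From mathcomp Require Import all_boot all_order all_algebra.
From mathcomp Require Import all_classical all_reals all_analysis.
From mathcomp Require Import lra.

Set Implicit Arguments.
Unset Strict Implicit.
Unset Printing Implicit Defensive.
Import Order.TTheory GRing.Theory Num.Theory numFieldNormedType.Exports.
Local Open Scope classical_set_scope.
Local Open Scope ring_scope.

(* Let [u] be a vertex of minimum degree [d]. The eigen-equation at [u], Cauchy-Schwarz on the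
   neighbourhood of [u] and the fact that each of the [n - d] non-neighbours carries mass at least
   [x^2] give [(lambda - alpha d)^2 x^2 <= (1 - alpha)^2 d (1 - (n - d) x^2)]. The growth of
   [ex(n, F)] forces [lambda >= (pi(F) - sigma) n - O(1)], so [lambda - d >= eps n / 2] for large
   [n], and this gap turns the inequality into [x^2 < (1 - eps^2) / n]. *)

Lemma weighted_cauchy_schwarz (R : realFieldType) n (w y : 'I_n -> R) :
  (forall j, 0 <= w j) ->
  (\sum_j w j * y j) ^+ 2 <= (\sum_j w j) * (\sum_j w j * y j ^+ 2).
Proof.
move=> w_ge0; set A := \sum_j w j; set B := \sum_j w j * y j.
set C := \sum_j w j * y j ^+ 2.
have [A0 | A_gt0] := eqVneq A 0.
  have w0 j : w j = 0 by exact: (psumr_eq0P (fun j _ => w_ge0 j) A0).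
  by rewrite A0 mul0r /B big1 ?expr0n // => j _; rewrite w0 mul0r.
have {}A_gt0 : 0 < A by rewrite lt_def A_gt0 sumr_ge0.
(* The quadratic [l |-> \sum_j w j (y j - l)^2] is nonnegative; evaluate it at [l = B / A]. *)
have quad_ge0 l : (l * B) *+ 2 <= C + l ^+ 2 * A.
  have : 0 <= \sum_j w j * (y j - l) ^+ 2.
    by apply: sumr_ge0 => j _; rewrite mulr_ge0 ?sqr_ge0.
  have -> : \sum_j w j * (y j - l) ^+ 2 = C - (l * B) *+ 2 + l ^+ 2 * A.
    rewrite /C /B /A mulr_sumr -sumrMnl mulr_sumr -sumrB -big_split /=.
    by apply: eq_bigr => j _; lra.
  by rewrite addrAC subr_ge0.
have := quad_ge0 (B / A).
rewrite (expr2 (B / A)) -(mulrA (B / A)) divfK ?gt_eqF // mulr2n lerD2r.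
by rewrite mulrAC ler_pdivrMr // -expr2 mulrC.
Qed.

Lemma telescoping_lower_bound (R : realFieldType) (f : nat -> R) (p : R) N :
  (forall n, (N < n)%N -> p * n%:R <= f n - f n.-1) ->
  exists C, forall n, (N < n)%N -> p * n%:R - C <= 2 * f n / n%:R.
Proof.
move=> f_incr; set g := 2 * f N - p * (N%:R * (N%:R + 1)).
(* [2 f n - p n (n + 1)] is nondecreasing beyond [N]. *)
have g_le k : g <= 2 * f (N + k)%N - p * ((N + k)%:R * ((N + k)%:R + 1)).
  elim: k => [|k IHk]; first by rewrite addn0.
  have := f_incr (N + k.+1)%N; rewrite addnS ltnS leq_addr /= => /(_ isT).
  rewrite -addn1 natrD => step; set m := (N + k)%:R in IHk step *; lra.
exists (`|g| + `|p|) => n lt_Nn.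
have n_ge1 : 1 <= n%:R :> R by rewrite ler1n (leq_ltn_trans _ lt_Nn).
have := g_le (n - N)%N; rewrite subnKC ?(ltnW lt_Nn) // ler_pdivlMr; last by lra.
have g_ge : - `|g| * n%:R <= g.
  by apply: le_trans (lerNnormlW (lexx _)); rewrite mulNr lerN2 ler_peMr.
have p_ge : - `|p| * n%:R <= p * n%:R.
  by rewrite mulNr -mulNr ler_wpM2r ?(le_trans ler01) // lerNnormlW.
set m := n%:R in n_ge1 g_ge p_ge *; lra.
Qed.

Lemma eventually_lt_natrM (R : archiRealFieldType) (c a : R) :
  0 < a -> exists N, forall n, (N < n)%N -> c < n%:R * a.
Proof.
move=> a_gt0; exists (Num.Def.archi_bound `|c / a|) => n lt_n.
rewrite -ltr_pdivrMr // (le_lt_trans (ler_norm _)) //.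
by rewrite (lt_trans (archi_boundP (normr_ge0 _))) // ltr_nat.
Qed.

Lemma spectral_ineq_gap_lt (R : realFieldType) (n d b E eps t : R) :
  0 < n -> 0 <= d -> 0 < b -> b <= 1 -> 0 < E -> 0 < eps -> eps * 2 < 1 ->
  eps * n <= E * 2 -> 0 <= t ->
  (b * d + E) ^+ 2 * t <= b ^+ 2 * d * (1 - (n - d) * t) ->
  t < (1 - eps ^+ 2) / n.
Proof.
move=> n_gt0 d_ge0 b_gt0 b_le1 E_gt0 eps_gt0 eps_lt gap t_ge0 ineq.
rewrite ltr_pdivlMr // ltNge; apply/negP => tn_ge.
(* Multiplying the expanded inequality by [n] leaves [(1 - eps^2) E^2 <= 0]: the gap
   [2 E >= eps n] lets the cross term [2 b d E] absorb the deficit [eps^2 b^2 d n]. *)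
set X := b ^+ 2 * d * n + b * d * E * 2 + E ^+ 2.
have bd_ge0 : 0 <= b * d by nra.
have bbd_ge0 : 0 <= b ^+ 2 * d by nra.
have X_ge0 : 0 <= X by rewrite /X; nra.
have tX_le : t * X <= b ^+ 2 * d by rewrite /X; nra.
have compl_X_le : (1 - eps ^+ 2) * X <= n * (b ^+ 2 * d) by nra.
have cross_ge : eps ^+ 2 * (b ^+ 2 * d * n) <= (1 - eps ^+ 2) * (b * d * E * 2).
  have eps_le_compl : eps <= 1 - eps ^+ 2 by nra.
  have bdE_ge0 : 0 <= b * d * E * 2 by nra.
  have bdn_ge0 : 0 <= b * d * n by nra.
  have b_drop : b ^+ 2 * d * n <= b * d * n by nra.
  have gap_bd : eps * (b * d * n) <= b * d * E * 2 by nra.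
  apply: (@le_trans _ _ (eps * (b * d * E * 2))); nra.
have compl_E_gt0 : 0 < (1 - eps ^+ 2) * E ^+ 2 by apply: mulr_gt0; nra.
rewrite /X in compl_X_le; nra.
Qed.

Lemma deg_sum_adj (R : realFieldType) n (G : graph n) u :
  (deg G u)%:R = \sum_j ((gadj G u j)%:R : R).
Proof.
rewrite /deg -sum1_card natr_sum big_mkcond /=; apply: eq_bigr => j _.
by case: (boolP (gadj G u j)) => [adj | /negP nadj]; [rewrite mem_set | rewrite memNset].
Qed.

Lemma exists_deg_le_mindeg n (G : graph n) : (0 < n)%N -> exists u, (deg G u <= mindeg G)%N.
Proof.
move=> n_gt0; apply: (big_ind (fun m => exists u, (deg G u <= m)%N)).
- by exists (Ordinal n_gt0); rewrite /deg -[n in (_ <= n)%N]card_ord max_card.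
- by move=> a b [u le_ua] [v le_vb]; case: (leqP a b) => _; [exists u | exists v].
- by move=> i _; exists i.
Qed.

Section VectorMinimum.

Variables (R : realType) (n : nat) (x : 'cV[R]_n).
Hypothesis x_ge0 : forall i, 0 <= x i 0.

Lemma vmin_le i : vmin x <= x i 0.
Proof. by apply: ge_inf; [exists 0 => _ [j _ <-] | exists i]. Qed.

Lemma vmin_ge0 : (0 < n)%N -> 0 <= vmin x.
Proof.
move=> n_gt0; apply: lb_le_inf; first by exists (x (Ordinal n_gt0) 0), (Ordinal n_gt0).
by move=> _ [i _ <-].
Qed.

End VectorMinimum.

Section AalphaEigenvector.

Variables (R : realType) (alpha lam : R) (n : nat) (G : graph n) (x : 'cV[R]_n).
Hypothesis x_eigen : Aalpha alpha G *m x = lam *: x.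

Lemma Aalpha_eigen_entry u :
  (lam - alpha * (deg G u)%:R) * x u 0 = (1 - alpha) * \sum_j (gadj G u j)%:R * x j 0.
Proof.
have := congr1 (fun y : 'cV[R]_n => y u 0) x_eigen; rewrite !mxE.
under eq_bigr do rewrite mxE mulrDl.
rewrite big_split /= (bigD1 u) //= big1 => [|j /negbTE neq_ju]; last first.
  by rewrite eq_sym neq_ju mul0r mulr0 mul0r.
rewrite eqxx mul1r addr0 mulr_sumr mulrBl => <-; rewrite addrAC subrr add0r.
by apply: eq_bigr => j _; rewrite mulrA.
Qed.

Hypotheses (x_ge0 : forall i, 0 <= x i 0) (x_unit : \sum_i x i 0 ^+ 2 = 1).

Lemma sum_adj_sqr_le u :
  \sum_j (gadj G u j)%:R * x j 0 ^+ 2 <= 1 - (n%:R - (deg G u)%:R) * vmin x ^+ 2.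
Proof.
have -> : n%:R - (deg G u)%:R = \sum_j (1 - (gadj G u j)%:R) :> R.
  by rewrite sumrB sumr_const card_ord deg_sum_adj.
rewrite -[X in _ <= X - _]x_unit mulr_suml lerBrDr -big_split /=; apply: ler_sum => j _.
have n_gt0 : (0 < n)%N by apply: leq_ltn_trans (ltn_ord j).
have le_mx : vmin x ^+ 2 <= x j 0 ^+ 2 by rewrite ler_pXn2r ?nnegrE ?vmin_le ?vmin_ge0.
by case: gadj; rewrite /= ?mulr1n ?mulr0n; lra.
Qed.

Lemma Aalpha_eigen_vmin_bound u :
  0 <= lam - alpha * (deg G u)%:R ->
  (lam - alpha * (deg G u)%:R) ^+ 2 * vmin x ^+ 2 <=
    (1 - alpha) ^+ 2 * (deg G u)%:R * (1 - (n%:R - (deg G u)%:R) * vmin x ^+ 2).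
Proof.
set d := (deg G u)%:R; set D := lam - alpha * d => D_ge0.
have n_gt0 : (0 < n)%N by apply: leq_ltn_trans (ltn_ord u).
have CS := @weighted_cauchy_schwarz R n (fun j => (gadj G u j)%:R) (fun j => x j 0)
  (fun j => ler0n _ _).
rewrite -deg_sum_adj -/d in CS.
have Dm_ge0 : 0 <= D * vmin x by rewrite mulr_ge0 // vmin_ge0.
have Dm_le : D * vmin x <= D * x u 0 by rewrite ler_wpM2l // vmin_le.
rewrite -exprMn (le_trans (_ : _ <= (D * x u 0) ^+ 2)) //.
  by rewrite ler_pXn2r // nnegrE (le_trans Dm_ge0).
rewrite Aalpha_eigen_entry exprMn -mulrA ler_wpM2l ?sqr_ge0 // (le_trans CS) //.
by rewrite ler_wpM2l ?ler0n // sum_adj_sqr_le.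
Qed.

End AalphaEigenvector.

Theorem lemma5p4 (R : realType) (F : gfamily) (r : nat) (eps sigma alpha : R) :
  (exists k (H : graph k), F k H) ->
  family_chi F r.+1 -> (3 <= r.+1)%N ->
  0 < eps -> eps < 1 / 2 ->
  0 < sigma -> sigma < eps ^+ 3 / 7 ->
  0 <= alpha -> alpha <= 1 - 1 / r%:R - eps ->
  (exists N : nat, forall n : nat, (N < n)%N ->
      `|exF R F n - exF R F n.-1 - pi_fam R F * n%:R| <= sigma * n%:R /\
      `|lambda_fam alpha F eps n - 2 * exF R F n / n%:R| <= sigma) ->
  exists N0 : nat, forall n : nat, (N0 < n)%N ->
    forall (G : graph n) (x : 'cV[R]_n),
      (forall i, 0 <= x i 0) ->
      \sum_(i < n) x i 0 ^+ 2 = 1 ->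
      Aalpha alpha G *m x = lambda_alpha alpha G *: x ->
      lambda_fam alpha F eps n <= lambda_alpha alpha G ->
      ((mindeg G)%:R <= (pi_fam R F - eps) * n%:R) ->
      Ffree F G ->
      vmin x ^+ 2 < (1 - eps ^+ 2) / n%:R.
Proof.
move=> _ _ _ eps_gt0 eps_lt sigma_gt0 sigma_lt alpha_ge0 alpha_le [N exF_lambda].
have [C ex_lb] : exists C, forall n, (N < n)%N ->
    (pi_fam R F - sigma) * n%:R - C <= 2 * exF R F n / n%:R.
  apply: telescoping_lower_bound => n /exF_lambda [+ _].
  by rewrite ler_norml => /andP [le_ex _]; lra.
have eps_sigma_gt0 : 0 < eps - sigma * 2.
  have eps_sqr : eps ^+ 2 <= 1 / 4 by nra.
  have : eps ^+ 3 <= eps / 4 by rewrite exprS; nra.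
  lra.
have [N1 n_large] := eventually_lt_natrM ((C + sigma) * 2) eps_sigma_gt0.
exists (maxn N N1) => n; rewrite gtn_max => /andP [lt_Nn /n_large {}n_large].
move=> G x x_ge0 x_unit x_eigen lam_ge mindeg_le _.
set lam := lambda_alpha alpha G in x_eigen lam_ge *.
have n_gt0 : (0 < n)%N by apply: leq_ltn_trans lt_Nn.
have nR_gt0 : 0 < n%:R :> R by rewrite ltr0n.
have lam_lb : (pi_fam R F - sigma) * n%:R - C - sigma <= lam.
  have [_] := exF_lambda n lt_Nn; rewrite ler_norml => /andP [le_lam _].
  have := ex_lb n lt_Nn; lra.
have [u deg_u] := exists_deg_le_mindeg G n_gt0.
set d := (deg G u)%:R : R.
have d_ge0 : 0 <= d by rewrite ler0n.
have d_le : d <= (pi_fam R F - eps) * n%:R by apply: le_trans mindeg_le; rewrite ler_nat.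
have gap : eps * n%:R <= (lam - d) * 2 by lra.
have gap_gt0 : 0 < lam - d by have := mulr_gt0 eps_gt0 nR_gt0; lra.
have alpha_lt1 : alpha < 1 by have : 0 <= 1 / r%:R :> R by []; lra.
apply: (@spectral_ineq_gap_lt _ _ d (1 - alpha) (lam - d)); rewrite ?sqr_ge0 //;
  [lra | lra | lra |].
have -> : (1 - alpha) * d + (lam - d) = lam - alpha * d by lra.
have alpha_d_le : alpha * d <= d := ler_piMl d_ge0 (ltW alpha_lt1).
by apply: (Aalpha_eigen_vmin_bound x_eigen x_ge0 x_unit); lra.
Qed.
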